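(* Let $x\in\widetilde X$ and let $\theta\in I^{\mathbb{N}}$ be its itinerary, where $I=\{1,\dots,N\}$. Then \[ p(\theta,n+1)\leqslant p(\theta,n)+\sum_{k=2}^N(k-1)\,\#L_n^k(\theta)\qquad\forall\, n\geqslant 1. \] If moreover $f$ satisfies the separation property, then this inequality is an equality for all $n\geqslant 1$.
   Context: Let $(X,d)$ be a compact metric space, $X_1,\dots,X_N$ ($N\geqslant 2$) non-empty pairwise disjoint open subsets with $X=\bigcup_i\overline{X_i}$, $\Delta:=\{x\in\overline{X_i}\cap\overline{X_j}:i\neq j\}$, and $f:X\to X$ a map such that each $f|_{X_i}$ admits a continuous extension $f_i:\overline{X_i}\to X$. Separation property: each $f_i$ injective and $f_i(\overline{X_i})\cap f_j(\overline{X_j})=\emptyset$ for $i\neq j$. $\widetilde X:=\bigcap_{n\geqslant 0}f^{-n}(X\setminus\Delta)$; the itinerary of $x\in\widetilde X$ is $\theta$ with $\theta_t=i$ iff $f^t(x)\in X_i$. $L_n(\theta):=\{\theta_t\dots\theta_{t+n-1}:t\geqslant 0\}$, $p(\theta,n):=\#L_n(\theta)$. For $A\subset X$ let $F_i(A):=\overline{f(A\cap X_i)}$ and $A_{i_1\dots i_n}:=F_{i_n}\circ\dots\circ F_{i_1}(X)$. For $n\geqslant1$, $k\in I$, \[ L_n^k(\theta):=\{i_1\dots i_n\in L_n(\theta):\#\{j\in I:\exists t\geqslant0 \text{ with } f^{t+n}(x)\in A_{i_1\dots i_n}\cap X_j\}=k\}. \] *)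

From HB Require Import structures.
From mathcomp Require Import all_boot all_order all_algebra.
From mathcomp Require Import all_classical all_reals all_analysis.
Set Implicit Arguments. Unset Strict Implicit. Unset Printing Implicit Defensive.
Import Order.TTheory GRing.Theory Num.Theory.
Local Open Scope classical_set_scope.

Section Defs.
Context {T : Type} {N : nat} (Xi : 'I_N -> set T) (f : T -> T).

Definition Delta {R : realType} {M : metricType R} (Xs : 'I_N -> set M) : set M :=
  [set y | exists i j : 'I_N, i != j /\ closure (Xs i) y /\ closure (Xs j) y].

Definition word (theta : nat -> 'I_N) (n t : nat) : n.-tuple 'I_N :=
  [tuple theta (t + val i) | i < n].

Definition Lang (theta : nat -> 'I_N) (n : nat) : {set n.-tuple 'I_N} :=
  [set w | `[< exists t : nat, w = word theta n t >]].

Definition complexity (theta : nat -> 'I_N) (n : nat) : nat := #|Lang theta n|.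

End Defs.

Section Defs2.
Context {R : realType} {M : metricType R} {N : nat}
  (Xi : 'I_N -> set M) (f : M -> M).

Definition Xtilde : set M := [set y | forall n : nat, ~ Delta Xi (iter n f y)].

Definition Fop (i : 'I_N) (A : set M) : set M := closure (f @` (A `&` Xi i)).

Definition Aword (w : seq 'I_N) : set M := foldl (fun A i => Fop i A) setT w.

Definition nfollow (x : M) (n : nat) (w : n.-tuple 'I_N) : nat :=
  #|[set j : 'I_N | `[< exists t : nat, (Aword w `&` Xi j) (iter (t + n) f x) >]]|.

Definition Lang_k (x : M) (theta : nat -> 'I_N) (n k : nat) : {set n.-tuple 'I_N} :=
  [set w in Lang theta n | nfollow x w == k].

Definition separation (fe : 'I_N -> M -> M) : Prop :=
  (forall i, {in closure (Xi i) &, injective (fe i)}) /\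
  (forall i j, i != j -> fe i @` closure (Xi i) `&` fe j @` closure (Xi j) = set0).

End Defs2.

From HB Require Import structures.
From mathcomp Require Import all_boot all_order all_algebra.
From mathcomp Require Import all_classical all_reals all_analysis.
From mathcomp Require Import zify.
Import Order.TTheory GRing.Theory Num.Theory.

(* Cutting off the last letter maps L_(n+1)(theta) injectively into the set of
   extensions (w, j) of words w in L_n(theta) by a follower j, i.e. a j with
   f^(t+n)(x) in A_w and in X_j for some t.  Every word of L_n(theta) has a
   follower (its next letter along the orbit) and the words of L_n^k(theta)
   have exactly k, so there are p(theta, n) + sum_k (k - 1) #L_n^k(theta)
   extensions.  Under the separation property, a point f(z) with z in X_j lies
   in F_i(A), A closed, only if j = i and z lies in A; by induction f^m(x) in
   A_w then forces the |w| letters of the itinerary before time m to spell w,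
   so every extension is a word of L_(n+1)(theta). *)

Lemma card_set_dep_pair (T1 T2 : finType) (A : {set T1}) (B : T1 -> {set T2}) :
  #|[set p : T1 * T2 | (p.1 \in A) && (p.2 \in B p.1)]| = \sum_(a in A) #|B a|.
Proof.
under [RHS]eq_bigr do rewrite -sum1_card.
by rewrite -sum1_card pair_big_dep; apply: eq_bigl => p; rewrite inE.
Qed.

Lemma sum_nat_by_level (T : finType) (A : {set T}) (K : T -> nat) n :
  {in A, forall a, 0 < K a <= n} ->
  \sum_(a in A) K a = #|A| + \sum_(2 <= k < n.+1) (k - 1) * #|[set a in A | K a == k]|.
Proof.
move=> Kbd.
have K_level a : a \in A -> K a = 1 + \sum_(2 <= k < n.+1 | k == K a) (k - 1).
  move=> /Kbd /andP[K_gt0 K_le]; rewrite big_nat1_eq ltnS K_le andbT.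
  by case: ifP => /= [|/negbT]; lia.
rewrite (eq_bigr _ K_level) big_split sum1_card /=; congr (_ + _).
under eq_bigr do rewrite big_mkcond.
rewrite exchange_big /=; apply: eq_bigr => k _.
rewrite -big_mkcondr /= mulnC -sum_nat_const.
by apply: eq_bigl => a; rewrite inE eq_sym.
Qed.

Definition extend {N n : nat} (p : n.-tuple 'I_N * 'I_N) : n.+1.-tuple 'I_N :=
  [tuple of rcons p.1 p.2].

Lemma extend_inj N n : injective (@extend N n).
Proof. by move=> [u i] [v j] /(congr1 val)/rcons_inj [/val_inj -> ->]. Qed.

Section Words.
Variables (N : nat) (theta : nat -> 'I_N).

Lemma word_rcons n t :
  word theta n.+1 t = [tuple of rcons (word theta n t) (theta (t + n))].
Proof. by apply: val_inj => /=; rewrite enum_ordSr map_rcons -map_comp. Qed.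

Lemma LangP n w : reflect (exists t, w = word theta n t) (w \in Lang theta n).
Proof. by rewrite inE; apply: asboolP. Qed.

End Words.

Local Open Scope classical_set_scope.

Section Itinerary.
Context {R : realType} {M : metricType R} {N : nat}.
Context {Xi : 'I_N -> set M} {f : M -> M} {x : M} {theta : nat -> 'I_N}.
Hypothesis theta_itinerary : forall t i, theta t = i <-> Xi i (iter t f x).

Lemma Aword_rcons w i : Aword Xi f (rcons w i) = Fop Xi f i (Aword Xi f w).
Proof. by rewrite /Aword foldl_rcons. Qed.

Lemma closed_Aword w : closed (Aword Xi f w).
Proof.
case/lastP: w => [|w i]; first exact: closedT.
by rewrite Aword_rcons; apply: closed_closure.
Qed.

Definition followers {n} (w : n.-tuple 'I_N) : {set 'I_N} :=
  [set j | `[< exists t, (Aword Xi f w `&` Xi j) (iter (t + n) f x) >]]%SET.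

Lemma followersP n (w : n.-tuple 'I_N) j :
  reflect (exists t, (Aword Xi f w `&` Xi j) (iter (t + n) f x)) (j \in followers w).
Proof. by rewrite inE; apply: asboolP. Qed.

Lemma nfollowE {n} (w : n.-tuple 'I_N) : nfollow Xi f x w = #|followers w|.
Proof. by apply: eq_card => j; rewrite inE /in_mem /= /in_set asboolb. Qed.

Lemma orbit_in_Aword n t : Aword Xi f (word theta n t) (iter (t + n) f x).
Proof.
elim: n => [|n IH]; first by rewrite tuple0.
rewrite word_rcons /= Aword_rcons addnS.
apply: subset_closure; exists (iter (t + n) f x) => //.
by split => //; apply/theta_itinerary.
Qed.

Lemma itinerary_follower n t : theta (t + n) \in followers (word theta n t).
Proof.
apply/followersP; exists t; split; first exact: orbit_in_Aword.
exact/theta_itinerary.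
Qed.

Definition extensions n : {set n.-tuple 'I_N * 'I_N} :=
  [set p | (p.1 \in Lang theta n) && (p.2 \in followers p.1)]%SET.

Lemma card_extensions n :
  #|extensions n| = complexity theta n +
    \sum_(2 <= k < N.+1) (k - 1) * #|Lang_k Xi f x theta n k|.
Proof.
rewrite card_set_dep_pair -(eq_bigr _ (fun w _ => nfollowE w)).
apply: sum_nat_by_level => _ /LangP [t ->].
rewrite nfollowE card_gt0 -[leqRHS]card_ord max_card andbT.
by apply/set0Pn; exists (theta (t + n)); apply: itinerary_follower.
Qed.

Lemma Lang_succ_sub_extensions n : Lang theta n.+1 \subset extend @: extensions n.
Proof.
apply/fintype.subsetP => _ /LangP [t ->]; apply/imsetP.
exists (word theta n t, theta (t + n)); last exact: word_rcons.
by rewrite inE itinerary_follower andbT; apply/LangP; exists t.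
Qed.

Lemma complexity_succ_le n : complexity theta n.+1 <= #|extensions n|.
Proof.
rewrite -(card_imset _ (extend_inj N n)).
exact/subset_leq_card/Lang_succ_sub_extensions.
Qed.

Section Separation.
Context {fe : 'I_N -> M -> M}.
Hypothesis M_compact : compact [set: M].
Hypothesis fe_ext : forall i y, Xi i y -> fe i y = f y.
Hypothesis fe_cont : forall i, {within closure (Xi i), continuous (fe i)}.
Hypothesis fe_sep : separation Xi fe.

(* The right-hand side is compact, hence closed. *)
Lemma Fop_sub_image i B : Fop Xi f i B `<=` fe i @` closure (B `&` Xi i).
Proof.
have sub_cl : closure (B `&` Xi i) `<=` closure (Xi i) := closureS (@subIsetr _ _ _).
have compact_image : compact (fe i @` closure (B `&` Xi i)).
  apply: continuous_compact; first exact: continuous_subspaceW sub_cl (fe_cont i).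
  by apply: subclosed_compact M_compact _ => //; apply: closed_closure.
have closed_image := compact_closed (@metric_hausdorff _ M) compact_image.
rewrite /Fop [X in _ `<=` X]((closure_id _).1 closed_image).
apply: closureS => _ [y [By Xy] <-]; exists y; first exact: subset_closure.
exact: fe_ext.
Qed.

Lemma Fop_preimage {i j A z} :
  closed A -> Xi j z -> Fop Xi f i A (f z) -> j = i /\ A z.
Proof.
move=> closedA Xz /Fop_sub_image [z' z'_cl fe_z'].
case: fe_sep => fe_inj fe_disj.
have z'_Xi : closure (Xi i) z' := closureS (@subIsetr _ _ _) z'_cl.
have eq_ji : j = i.
  apply/eqP/contraT => /fe_disj disj; suff : (set0 : set M) (f z) by [].
  rewrite -disj; split; last by exists z'.
  by exists z; [exact: subset_closure | exact: fe_ext].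
subst j; have eq_zz' : z = z'.
  apply: (fe_inj i); rewrite ?inE //; first exact: subset_closure.
  by rewrite (fe_ext _ _ Xz) fe_z'.
split => //; rewrite eq_zz' ((closure_id _).1 closedA).
exact: (closureS (@subIsetl _ _ _) z'_cl).
Qed.

Lemma Aword_itinerary {w m} :
  size w <= m -> Aword Xi f w (iter m f x) -> w = word theta (size w) (m - size w).
Proof.
elim/last_ind: w m => [|w i IH] [|m]; rewrite ?size_rcons // ?tuple0 // ltnS => le_wm.
have Xm : Xi (theta m) (iter m f x) by apply/theta_itinerary.
rewrite iterS Aword_rcons => /(Fop_preimage (closed_Aword w) Xm) [<- Aw].
by rewrite subSS word_rcons /= -(IH _ le_wm Aw) subnK.
Qed.

Lemma extensions_sub_Lang_succ n : extend @: extensions n \subset Lang theta n.+1.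
Proof.
apply/fintype.subsetP => _ /imsetP [[w j] + ->]; rewrite inE /=.
move=> /andP [/LangP [t ->] /followersP [t' [Aw Xj]]].
apply/LangP; exists t'; rewrite word_rcons; apply: val_inj => /=.
have le_nm : size (word theta n t) <= t' + n by rewrite size_tuple leq_addl.
have := Aword_itinerary le_nm Aw; rewrite size_tuple addnK => <-.
by congr rcons; apply/esym/theta_itinerary.
Qed.

Lemma complexity_succ_eq n : complexity theta n.+1 = #|extensions n|.
Proof.
apply/eqP; rewrite eqn_leq complexity_succ_le /complexity.
by rewrite -(card_imset _ (extend_inj N n)) subset_leq_card ?extensions_sub_Lang_succ.
Qed.

End Separation.
End Itinerary.

Theorem lemma4 (R : realType) (M : metricType R) (N : nat) (hN : (2 <= N)%N)
  (Xi : 'I_N -> set M) (f : M -> M) (fe : 'I_N -> M -> M)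
  (hcpt : compact [set: M])
  (hne : forall i, Xi i !=set0)
  (hopen : forall i, open (Xi i))
  (hdisj : forall i j, i != j -> Xi i `&` Xi j = set0)
  (hcover : [set: M] = \bigcup_i closure (Xi i))
  (hfe_ext : forall i x, Xi i x -> fe i x = f x)
  (hfe_cont : forall i, {within closure (Xi i), continuous (fe i)})
  (x : M) (hx : Xtilde Xi f x)
  (theta : nat -> 'I_N)
  (htheta : forall (t : nat) (i : 'I_N), theta t = i <-> Xi i (iter t f x)) :
  (forall n : nat, (1 <= n)%N ->
     (complexity theta n.+1 <=
      complexity theta n + \sum_(2 <= k < N.+1) (k - 1) * #|Lang_k Xi f x theta n k|)%N)
  /\
  (separation Xi fe ->
   forall n : nat, (1 <= n)%N ->
     complexity theta n.+1 =
      (complexity theta n + \sum_(2 <= k < N.+1) (k - 1) * #|Lang_k Xi f x theta n k|)%N).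
Proof.
split=> [|hsep] n _; rewrite -(card_extensions htheta).
- exact: complexity_succ_le.
- exact: (complexity_succ_eq htheta hcpt hfe_ext hfe_cont hsep).
Qed.
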